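(* Let $G=(V,E)$ be a finite connected simple graph and $i\in V$. For $u,v\in V\setminus\{i\}$ write $u\sim_i v$ if there is a graph automorphism $\pi$ of $G$ with $\pi(i)=i$ and $\pi(u)=v$; this is an equivalence relation, and together with the singleton $\{i\}$ its classes partition $V$. Form the weighted graph $G_i$ whose vertices are these classes, with $\phi_i:V\to V(G_i)$ mapping each vertex to its class, vertex weights $w_V(x)=|\phi_i^{-1}(x)|$, and edge weights $w_E(x,y)=$ the number of edges of $G$ with one endpoint in $\phi_i^{-1}(x)$ and the other in $\phi_i^{-1}(y)$ (with $xy$ an edge of $G_i$ when this number is positive). Suppose that no $\sim_i$-equivalence class contains an edge of $G$. Let $\widehat f_i$ be any solution of the weighted problem on $G_i$ with special vertex $\phi_i(i)$, i.e. a function $g:V(G_i)\to\mathbb{R}$ minimizing $\sum_{xy\in E(G_i)} w_E(x,y)(g(x)-g(y))^2$ subject to $\sum_{x} w_V(x)g(x)^2=1$ and $g(\phi_i(i))=0$. Then the function $f_i:V\to\mathbb{R}$, $f_i(j)=\widehat f_i(\phi_i(j))$, is a solution of the problem $$\min_{g:V\to\mathbb{R},\ \|g\|_2=1,\ g(i)=0}\ \sum_{jk\in E}(g(k)-g(j))^2$$ on $G$.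
   Context: A graph automorphism is a bijection $\pi:V\to V$ with $xy\in E$ iff $\pi(x)\pi(y)\in E$. In the objective, each edge is counted once. *)

From HB Require Import structures.
From mathcomp Require Import all_boot all_order all_algebra all_fingroup.
From mathcomp Require Import reals.
Set Implicit Arguments. Unset Strict Implicit. Unset Printing Implicit Defensive.
Import Order.TTheory GRing.Theory Num.Theory.
Local Open Scope ring_scope.

Section Defs.
Variable T : finType.

Definition simple_graph (e : rel T) : Prop := symmetric e /\ irreflexive e.
Definition connected_graph (e : rel T) : Prop := forall x y, connect e x y.

Definition is_aut (e : rel T) (p : {perm T}) : bool :=
  [forall x, forall y, e x y == e (p x) (p y)].

Definition sim_at (e : rel T) (i u v : T) : bool :=
  [exists p : {perm T}, [&& is_aut e p, p i == i & p u == v]].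

Definition phi (e : rel T) (i x : T) : {set T} := [set y | sim_at e i x y].

Definition classes (e : rel T) (i : T) : {set {set T}} := [set phi e i x | x in T].

Definition wV (X : {set T}) : nat := #|X|.

(* number of edges of G with one endpoint in X and the other in Y
   (X, Y distinct classes, hence disjoint: each edge counted once) *)
Definition wE (e : rel T) (X Y : {set T}) : nat :=
  #|[set p : T * T | [&& e p.1 p.2, p.1 \in X & p.2 \in Y]]|.

Variable R : realType.

(* objective on G, each edge counted once *)
Definition energy (e : rel T) (g : T -> R) : R :=
  2^-1 * \sum_(j : T) \sum_(k : T | e j k) (g k - g j) ^+ 2.

Definition feasible (i : T) (g : T -> R) : Prop :=
  \sum_(j : T) g j ^+ 2 = 1 /\ g i = 0.

Definition solution (e : rel T) (i : T) (g : T -> R) : Prop :=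
  feasible i g /\ forall g', feasible i g' -> energy e g <= energy e g'.

(* weighted objective on G_i, each edge {x,y} of G_i counted once *)
Definition wenergy (e : rel T) (i : T) (h : {set T} -> R) : R :=
  2^-1 * \sum_(X in classes e i) \sum_(Y in classes e i | X != Y)
           (wE e X Y)%:R * (h X - h Y) ^+ 2.

Definition wfeasible (e : rel T) (i : T) (h : {set T} -> R) : Prop :=
  \sum_(X in classes e i) (wV X)%:R * h X ^+ 2 = 1 /\ h (phi e i i) = 0.

Definition wsolution (e : rel T) (i : T) (h : {set T} -> R) : Prop :=
  wfeasible e i h /\ forall h', wfeasible e i h' -> wenergy e i h <= wenergy e i h'.

End Defs.

From Pilot Require Import Defs.
From mathcomp Require Import all_boot all_order all_algebra all_fingroup.
From mathcomp Require Import reals ring lra.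
Set Implicit Arguments. Unset Strict Implicit. Unset Printing Implicit Defensive.
Import Order.TTheory GRing.Theory Num.Theory.
Local Open Scope ring_scope.

(* Composing with [phi e i] identifies functions on the quotient graph with the
   functions on [T] that are constant on the orbits of the stabiliser Gamma of
   [i] in Aut(G); it preserves the constraint and the objective.  Conversely, a
   feasible [g] on [T] may be replaced by its root mean square over Gamma,
   [h j = sqrt (|Gamma|^-1 * sum_(p in Gamma) g (p j)^2)], which is invariant,
   still feasible, and has no larger energy: on each edge, the reverse triangle
   inequality in l^2(Gamma) bounds [(h k - h j)^2] by the mean of
   [(g (p k) - g (p j))^2], and every [p] in Gamma preserves the energy. *)

Section SumsOfSquares.
Variables (I : finType) (P : pred I).

Lemma sum_mul_sqr_le (R : realFieldType) (a b : I -> R) :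
  (\sum_(x | P x) a x * b x) ^+ 2 <=
  (\sum_(x | P x) a x ^+ 2) * (\sum_(x | P x) b x ^+ 2).
Proof.
have lagrange : \sum_(x | P x) \sum_(y | P y) (a x * b y - a y * b x) ^+ 2 =
    2 * ((\sum_(x | P x) a x ^+ 2) * (\sum_(x | P x) b x ^+ 2)
         - (\sum_(x | P x) a x * b x) ^+ 2).
  have expand x y : (a x * b y - a y * b x) ^+ 2 =
      a x ^+ 2 * b y ^+ 2 + b x ^+ 2 * a y ^+ 2 - 2 * (a x * b x) * (a y * b y).
    by ring.
  under eq_bigr => x _ do under eq_bigr => y _ do rewrite expand.
  under eq_bigr => x _ do rewrite sumrB big_split /= -!mulr_sumr.
  by rewrite sumrB big_split /= -!mulr_suml expr2 -mulr_sumr; ring.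
have : 0 <= \sum_(x | P x) \sum_(y | P y) (a x * b y - a y * b x) ^+ 2.
  by do 2![apply: sumr_ge0 => ? _]; exact: sqr_ge0.
by rewrite lagrange -subr_ge0; lra.
Qed.

Lemma sqr_sqrt_sumB_le (R : rcfType) (a b : I -> R) :
  (Num.sqrt (\sum_(x | P x) a x ^+ 2) - Num.sqrt (\sum_(x | P x) b x ^+ 2)) ^+ 2
  <= \sum_(x | P x) (a x - b x) ^+ 2.
Proof.
set A := \sum_(x | P x) a x ^+ 2; set B := \sum_(x | P x) b x ^+ 2.
set S := \sum_(x | P x) a x * b x.
have A_ge0 : 0 <= A by apply: sumr_ge0 => x _; exact: sqr_ge0.
have B_ge0 : 0 <= B by apply: sumr_ge0 => x _; exact: sqr_ge0.
have -> : \sum_(x | P x) (a x - b x) ^+ 2 = A + B - 2 * S.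
  have expand x : (a x - b x) ^+ 2 = a x ^+ 2 + b x ^+ 2 - 2 * (a x * b x).
    by ring.
  by under eq_bigr => x _ do rewrite expand; rewrite sumrB big_split -mulr_sumr.
have S_le : S <= Num.sqrt A * Num.sqrt B.
  rewrite -sqrtrM //; have [S_le0 | S_gt0] := lerP S 0.
    exact: le_trans S_le0 (sqrtr_ge0 _).
  rewrite -[S]ger0_norm ?(ltW S_gt0) // -sqrtr_sqr ler_sqrt ?mulr_ge0 //.
  exact: sum_mul_sqr_le.
rewrite sqrrB !sqr_sqrtr //; lra.
Qed.

End SumsOfSquares.

Section Automorphisms.
Variables (T : finType) (e : rel T).

Lemma is_autP (p : {perm T}) :
  reflect (forall x y, e (p x) (p y) = e x y) (is_aut e p).
Proof.
apply: (iffP forallP) => [aut_p x y | aut_p x].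
  by move/forallP: (aut_p x) => /(_ y) /eqP.
by apply/forallP => y; rewrite aut_p.
Qed.

Definition aut_stab (i : T) : {set {perm T}} := [set p | is_aut e p & p i == i].

Lemma aut_stab_group_set i : group_set (aut_stab i).
Proof.
apply/group_setP; split=> [|p q].
  by rewrite inE perm1 eqxx andbT; apply/is_autP => x y; rewrite !perm1.
rewrite !inE => /andP[/is_autP aut_p /eqP p_i] /andP[/is_autP aut_q /eqP q_i].
rewrite permM p_i q_i eqxx andbT.
by apply/is_autP => x y; rewrite !permM aut_q aut_p.
Qed.

Canonical aut_stab_group i := group (aut_stab_group_set i).

Lemma phi_orbit i x : phi e i x = orbit 'P (aut_stab i) x.
Proof.
apply/setP => y; rewrite inE; apply/existsP/orbitP => [[p] | [p]].
  by case/and3P=> aut_p p_i /eqP p_x; exists p; rewrite // inE aut_p.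
by rewrite inE => /andP[aut_p p_i] <-; exists p; rewrite aut_p p_i eqxx.
Qed.

Lemma energy_aut (R : realType) (p : {perm T}) (g : T -> R) :
  is_aut e p -> energy e (fun j => g (p j)) = energy e g.
Proof.
move/is_autP=> aut_p; congr (_ * _).
rewrite [RHS](reindex_inj (@perm_inj _ p)); apply: eq_bigr => j _.
by rewrite [RHS](reindex_inj (@perm_inj _ p)); apply: eq_bigl => k; rewrite aut_p.
Qed.

Lemma eq_energy (R : realType) (g1 g2 : T -> R) :
  g1 =1 g2 -> energy e g1 = energy e g2.
Proof.
move=> eq_g; congr (_ * _).
by apply: eq_bigr => j _; apply: eq_bigr => k _; rewrite !eq_g.
Qed.

End Automorphisms.

Section Symmetrization.
Variables (T : finType) (e : rel T) (R : realType) (G : {group {perm T}}).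

Definition sym_rms (g : T -> R) (j : T) : R :=
  Num.sqrt (#|G|%:R^-1 * \sum_(p in G) g (p j) ^+ 2).

Lemma sym_rms_perm g :
  {in G, forall (s : {perm T}) j, sym_rms g (s j) = sym_rms g j}.
Proof.
move=> s Gs j; congr (Num.sqrt (_ * _)); rewrite [RHS](reindex_inj (mulgI s)).
by apply: eq_big => [p | p _]; rewrite ?groupMl ?permM.
Qed.

Lemma sym_rms_sqr g j :
  sym_rms g j ^+ 2 = #|G|%:R^-1 * \sum_(p in G) g (p j) ^+ 2.
Proof.
rewrite sqr_sqrtr // mulr_ge0 ?invr_ge0 ?ler0n //.
by apply: sumr_ge0 => p _; exact: sqr_ge0.
Qed.

Lemma sum_sym_rms_sqr g : \sum_j sym_rms g j ^+ 2 = \sum_j g j ^+ 2.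
Proof.
have G_neq0 : #|G|%:R != 0 :> R by rewrite pnatr_eq0 -lt0n cardG_gt0.
under eq_bigr => j _ do rewrite sym_rms_sqr.
rewrite -mulr_sumr exchange_big /=.
rewrite (eq_bigr (fun=> \sum_j g j ^+ 2)) => [|p _]; last first.
  by rewrite [RHS](reindex_inj (@perm_inj _ p)).
by rewrite sumr_const -[X in _ * X]mulr_natl mulKf.
Qed.

Hypothesis autG : {in G, forall p, is_aut e p}.

Lemma energy_sym_rms g : energy e (sym_rms g) <= energy e g.
Proof.
set c : R := #|G|%:R^-1.
have c_ge0 : 0 <= c by rewrite invr_ge0 ler0n.
have G_neq0 : #|G|%:R != 0 :> R by rewrite pnatr_eq0 -lt0n cardG_gt0.
have diff_le j k : (sym_rms g k - sym_rms g j) ^+ 2 <=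
                   c * \sum_(p in G) (g (p k) - g (p j)) ^+ 2.
  rewrite /sym_rms !sqrtrM // -mulrBr exprMn sqr_sqrtr //.
  by rewrite ler_wpM2l // sqr_sqrt_sumB_le.
have -> : energy e g = c * \sum_(p in G) energy e (fun j => g (p j)).
  rewrite (eq_bigr (fun=> energy e g)) => [|p /autG]; last exact: energy_aut.
  by rewrite sumr_const -[X in _ * X]mulr_natl mulKf.
rewrite /energy -mulr_sumr mulrCA ler_wpM2l ?invr_ge0 ?ler0n //.
rewrite exchange_big mulr_sumr; apply: ler_sum => j _.
by rewrite exchange_big mulr_sumr; apply: ler_sum => k _.
Qed.

End Symmetrization.

Section QuotientGraph.
Variables (T : finType) (e : rel T) (i : T) (R : realType).

Local Notation G := (aut_stab_group e i).
Local Notation classes := (Defs.classes e i).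

Lemma phi_classes x : phi e i x \in classes.
Proof. exact: imset_f. Qed.

Lemma mem_classes X j : X \in classes -> (j \in X) = (phi e i j == X).
Proof.
case/imsetP=> x _ ->; rewrite !phi_orbit.
by apply/idP/eqP => [/orbit_eqP | <-] //; exact: orbit_refl.
Qed.

Lemma sum_lift (F : {set T} -> R) :
  \sum_j F (phi e i j) = \sum_(X in classes) (wV X)%:R * F X.
Proof.
rewrite (partition_big (phi e i) (mem classes)) => [|j _]; last exact: phi_classes.
apply: eq_bigr => X classX; rewrite (eq_bigr (fun=> F X)) => [|j /eqP -> //].
rewrite (eq_bigl (mem X)) => [|j]; last by rewrite /= mem_classes.
by rewrite sumr_const mulr_natl.
Qed.

(* A class-constant function has no energy on edges inside a class, so the
   [X != Y] restriction in [wenergy] is harmless. *)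
Lemma energy_lift (H : {set T} -> R) :
  energy e (fun j => H (phi e i j)) = wenergy e i H.
Proof.
rewrite /energy /wenergy; congr (_ * _).
have -> : \sum_(X in classes) \sum_(Y in classes | X != Y)
      (wE e X Y)%:R * (H X - H Y) ^+ 2 =
    \sum_(X in classes) \sum_(Y in classes) (wE e X Y)%:R * (H X - H Y) ^+ 2.
  apply: eq_bigr => X classX; rewrite [RHS](bigD1 X) //= subrr expr0n mulr0 add0r.
  by apply: eq_bigl => Y; rewrite eq_sym.
rewrite pair_big_dep [RHS]pair_big_dep /=.
rewrite (partition_big (fun p : T * T => (phi e i p.1, phi e i p.2))
   (fun XY => (XY.1 \in classes) && (XY.2 \in classes))) => [|p _]; last first.
  by rewrite !phi_classes.
apply: eq_bigr => [[X Y]] /andP[/= classX classY].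
rewrite (eq_bigr (fun=> (H X - H Y) ^+ 2)) => [|p /andP[_ /eqP[-> ->]]]; last first.
  by rewrite -sqrrN opprB.
rewrite (eq_bigl (mem [set p : T * T | [&& e p.1 p.2, p.1 \in X & p.2 \in Y]])).
  by rewrite sumr_const mulr_natl.
move=> p; rewrite /= inE (mem_classes _ classX) (mem_classes _ classY) xpair_eqE.
by case: (e p.1 p.2).
Qed.

Lemma lift_of_invariant (h : T -> R) :
  {in G, forall (p : {perm T}) j, h (p j) = h j} ->
  exists H : {set T} -> R, forall j, h j = H (phi e i j).
Proof.
move=> h_inv; exists (fun X : {set T} => h (odflt i [pick j in X])) => j.
case: pickP => [k | no_pick] /=.
  by rewrite phi_orbit => /orbitP[p Gp <-]; rewrite h_inv.
by move: (no_pick j); rewrite phi_orbit orbit_refl.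
Qed.

Lemma wfeasible_lift (H : {set T} -> R) :
  wfeasible e i H <-> feasible i (fun j => H (phi e i j)).
Proof. by rewrite /wfeasible /feasible (sum_lift (fun X => H X ^+ 2)). Qed.

Lemma exists_wfeasible_le (g : T -> R) : feasible i g ->
  exists H : {set T} -> R, wfeasible e i H /\ wenergy e i H <= energy e g.
Proof.
case=> g_norm g_i; have [H h_H] := lift_of_invariant (@sym_rms_perm _ R G g).
exists H; split.
  apply/wfeasible_lift; split=> /=; last rewrite -h_H.
    by under eq_bigr => j _ do rewrite -h_H; rewrite sum_sym_rms_sqr.
  rewrite /sym_rms big1 ?mulr0 ?sqrtr0 // => p; rewrite inE => /andP[_ /eqP ->].
  by rewrite g_i expr0n.
rewrite -energy_lift -(eq_energy e h_H).
by apply: energy_sym_rms => p; rewrite inE => /andP[].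
Qed.

End QuotientGraph.

Theorem theorem4 (R : realType) (T : finType) (e : rel T) (i : T)
  (Hsimple : simple_graph e) (Hconn : connected_graph e)
  (Hnoedge : forall x y : T, e x y -> phi e i x != phi e i y)
  (fhat : {set T} -> R) (Hfhat : wsolution e i fhat) :
  solution e i (fun j => fhat (phi e i j)).
Proof.
case: Hfhat => [fhat_feas fhat_min]; split; first exact/wfeasible_lift.
move=> g g_feas; have [H [H_feas H_le]] := exists_wfeasible_le e g_feas.
by rewrite energy_lift (le_trans (fhat_min _ H_feas)).
Qed.
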